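(* Under the setup in the context, assume in addition that $H_j$ is nonsingular and that the block GMRES residual $F_{j-1}^{(G)}$ has rank $L$ (so $\tilde C_j$ is nonsingular). Let $Q_j^{(11)}=\mathcal U_1\mathcal C\mathcal V_1^*$ and $Q_j^{(21)}=\mathcal U_2\mathcal S\mathcal V_1^*$ be a CS decomposition of the first block column of $\Omega_j$, with $\mathcal U_1,\mathcal U_2,\mathcal V_1\in\mathbb C^{L\times L}$ unitary and $\mathcal C=\mathrm{diag}(c_1,\dots,c_L)$, $\mathcal S=\mathrm{diag}(s_1,\dots,s_L)$ real, nonnegative, with $c_i^2+s_i^2=1$. Then $$X_j^{(G)}=X_j^{(F)}\bigl(\tilde C_j^{-1}\mathcal V_1\mathcal C^2\mathcal V_1^*\tilde C_j\bigr)+X_{j-1}^{(G)}\bigl(\tilde C_j^{-1}\mathcal V_1\mathcal S^2\mathcal V_1^*\tilde C_j\bigr),$$ where the two bracketed matrices sum to $I_L$ and $\tilde C_j^{-1}\mathcal V_1\mathcal C^2\mathcal V_1^*\tilde C_j=\tilde C_j^{-1}(Q_j^{(11)})^*Q_j^{(11)}\tilde C_j$.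
   Context: Let $n,L\ge1$, $A\in\mathbb C^{n\times n}$, $B,X_0\in\mathbb C^{n\times L}$, $F_0=B-AX_0$, and let $F_0=V_1S_0$ be a reduced QR factorization ($V_1\in\mathbb C^{n\times L}$ with orthonormal columns, $S_0\in\mathbb C^{L\times L}$ upper triangular). Fix $j\ge2$. The block Arnoldi process (possibly with dependent basis vectors replaced by new orthonormal vectors) yields $W_k=[V_1,\dots,V_k]\in\mathbb C^{n\times kL}$ ($k\le j+1$) with orthonormal columns, $V_i\in\mathbb C^{n\times L}$, and the block Arnoldi relation $AW_j=W_{j+1}\bar H_j$, where $\bar H_j=(H_{ik})\in\mathbb C^{(j+1)L\times jL}$ has $L\times L$ blocks $H_{ik}$, is block upper Hessenberg ($H_{ik}=0$ for $i>k+1$), and each $H_{k+1,k}$ is upper triangular. For $k\le j$, $\bar H_k$ denotes the leading $(k+1)L\times kL$ submatrix of $\bar H_j$ and $H_k$ the leading $kL\times kL$ submatrix. $E^{[m]}\in\mathbb R^{mL\times L}$ denotes the first $L$ columns of $I_{mL}$. For $k\ge1$ with $\bar H_k$ of full column rank, the block GMRES iterate is $X_k^{(G)}=X_0+W_kY_k^{(G)}$, where $Y_k^{(G)}\in\mathbb C^{kL\times L}$ is the unique minimizer of $\|\bar H_kY-E^{[k+1]}S_0\|_F$ (Frobenius norm), and $F_k^{(G)}=B-AX_k^{(G)}$. If $H_k$ is nonsingular, the block FOM iterate is $X_k^{(F)}=X_0+W_kH_k^{-1}E^{[k]}S_0$. Block QR factorization: assume $\bar H_j$ has full column rank. There are unitary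 matrices $\Omega_i=\begin{bmatrix}Q_i^{(11)}&Q_i^{(12)}\\Q_i^{(21)}&Q_i^{(22)}\end{bmatrix}\in\mathbb C^{2L\times 2L}$ ($i=1,\dots,j$, all four blocks $L\times L$); for $m\ge i+1$ put $Q_i^{(m)}=\mathrm{diag}(I_{(i-1)L},\Omega_i,I_{(m-i-1)L})\in\mathbb C^{mL\times mL}$ and $\bar Q_k=Q_k^{(k+1)}Q_{k-1}^{(k+1)}\cdots Q_1^{(k+1)}$. The $\Omega_i$ are chosen recursively so that $\bar Q_k\bar H_k=\begin{bmatrix}R_k\\ 0_{L\times kL}\end{bmatrix}$ with $R_k\in\mathbb C^{kL\times kL}$ upper triangular and nonsingular ($k=1,\dots,j$). In particular $Q_{j-1}^{(j+1)}\cdots Q_1^{(j+1)}\bar H_j=\begin{bmatrix}R_{j-1}&Z_j\\0&\hat H_{jj}\\0&H_{j+1,j}\end{bmatrix}$ for some $Z_j\in\mathbb C^{(j-1)L\times L}$, $\hat H_{jj}\in\mathbb C^{L\times L}$; and $\Omega_j\begin{bmatrix}\hat H_{jj}\\H_{j+1,j}\end{bmatrix}=\begin{bmatrix}N_j\\0\end{bmatrix}$ with $N_j$ upper triangular and nonsingular. Write $\bar Q_{j-1}E^{[j]}S_0=\begin{bmatrix}G_{j-1}\\\tilde C_j\end{bmatrix}$ with $G_{j-1}\in\mathbb C^{(j-1)L\times L}$, $\tilde C_j\in\mathbb C^{L\times L}$. *)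

(* Complex scalars: an arbitrary numClosedFieldType C
   (e.g. algC), with conjugation Num.conj (notation x^* ). *)
From HB Require Import structures.
From mathcomp Require Import all_boot all_order all_algebra.
Set Implicit Arguments. Unset Strict Implicit. Unset Printing Implicit Defensive.
Import Order.TTheory GRing.Theory Num.Theory.
Local Open Scope ring_scope.

Section Defs.
Variable C : numClosedFieldType.

Definition ctmx m n (A : 'M[C]_(m, n)) : 'M[C]_(n, m) := (map_mx Num.conj A)^T.

(* entry of M at nat indices (i, k) (0-based), 0 when out of range *)
Definition nth_mx m n (M : 'M[C]_(m, n)) (i k : nat) : C :=
  match @insub nat (fun x => x < m)%N _ i, @insub nat (fun x => x < n)%N _ k with
  | Some i', Some k' => M i' k'
  | _, _ => 0
  end.

Definition lead_mx m n p q (M : 'M[C]_(m, n)) : 'M[C]_(p, q) :=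
  \matrix_(i < p, k < q) nth_mx M i k.

Definition upper_tri m (M : 'M[C]_m) : Prop :=
  forall a b : 'I_m, (b < a)%N -> M a b = 0.

Definition orthonormal_cols m n (M : 'M[C]_(m, n)) : Prop :=
  ctmx M *m M = 1%:M.

Definition frob m n (M : 'M[C]_(m, n)) : C :=
  sqrtC (\sum_(i < m) \sum_(k < n) `|M i k| ^+ 2).

(* L x L block (i,k) (1-based block indices) of M *)
Definition blk (L : nat) m n (M : 'M[C]_(m, n)) (i k : nat) : 'M[C]_L :=
  \matrix_(a < L, b < L) nth_mx M ((i.-1) * L + a) ((k.-1) * L + b).

Definition Emx (L m : nat) : 'M[C]_(m * L, L) :=
  \matrix_(r < m * L, c < L) ((r : nat) == c)%:R.

(* Q_i^{(m)} = diag(I_{(i-1)L}, Omega_i, I_{(m-i-1)L}) *)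
Definition Qm (L : nat) (Omega : nat -> 'M[C]_(L + L)) (m i : nat) : 'M[C]_(m * L) :=
  \matrix_(r < m * L, c < m * L)
    if [&& (i.-1) * L <= r, r < i.+1 * L, (i.-1) * L <= c & c < i.+1 * L]%N
    then nth_mx (Omega i) (r - (i.-1) * L) (c - (i.-1) * L)
    else ((r : nat) == c)%:R.

(* Qbar_k = Q_k^{(k+1)} ... Q_1^{(k+1)} *)
Definition Qbar (L : nat) (Omega : nat -> 'M[C]_(L + L)) (k : nat) : 'M[C]_(k.+1 * L) :=
  foldr (fun i acc => acc *m Qm Omega k.+1 i) 1%:M (iota 1 k).

End Defs.

(* Rotate every least-squares problem by its block QR factor.  With
   g = Qbar_(j-1) E S0, minimality of Y_(j-1) says that Qbar_(j-1) H_(j-1) Y_(j-1) agrees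
   with g except in the last block row, where it vanishes; that block of g is Ct = C~_j.
   Since Qbar_j = Q_j diag(Qbar_(j-1), I) and Q_j only mixes the last two block rows, the
   same argument at step j gives Qbar_(j-1) H_j Y_j = g - P Q21^* Q21 Ct, where P puts an
   L x L block in the last block row, while the FOM coefficient H_j^-1 E S0 is sent to g.
   As Q11^* Q11 + Q21^* Q21 = I and Qbar_(j-1) H_j is invertible, Y_j is the combination
   of the FOM coefficient and the zero-padded Y_(j-1) with weights
   Ct^-1 Q11^* Q11 Ct = Ct^-1 V C^2 V^* Ct and its complement.  Ct is invertible because
   the residual F_(j-1) = W_j Qbar_(j-1)^* P Ct has rank L. *)

From HB Require Import structures.
From mathcomp Require Import all_boot all_order all_algebra.
From mathcomp Require Import zify.
Import Order.TTheory GRing.Theory Num.Theory.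
Set Implicit Arguments. Unset Strict Implicit. Unset Printing Implicit Defensive.
Local Open Scope ring_scope.

Section NatIndexedEntries.
Variable C : numClosedFieldType.

Lemma nth_mxE m n (M : 'M[C]_(m, n)) r c (hr : (r < m)%N) (hc : (c < n)%N) :
  nth_mx M r c = M (Ordinal hr) (Ordinal hc).
Proof.
rewrite /nth_mx; case: insubP => [i _ ei|]; last by rewrite hr.
case: insubP => [k _ ek|]; last by rewrite hc.
by congr (M _ _); apply: val_inj.
Qed.

Lemma nth_mx_ord m n (M : 'M[C]_(m, n)) (i : 'I_m) (k : 'I_n) : nth_mx M i k = M i k.
Proof. by rewrite (nth_mxE M (ltn_ord i) (ltn_ord k)); congr (M _ _); apply: val_inj. Qed.

Lemma nth_mx_out m n (M : 'M[C]_(m, n)) r c :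
  ~~ ((r < m) && (c < n))%N -> nth_mx M r c = 0.
Proof.
rewrite /nth_mx; case: insubP => [i hi _|//]; case: insubP => [k hk _|//].
by rewrite hi hk.
Qed.

Lemma nth_mx_ext m n (A B : 'M[C]_(m, n)) :
  (forall r c, (r < m)%N -> (c < n)%N -> nth_mx A r c = nth_mx B r c) -> A = B.
Proof. by move=> eqAB; apply/matrixP => i k; rewrite -!nth_mx_ord eqAB. Qed.

Lemma nth_mx_mul m n p (A : 'M[C]_(m, n)) (B : 'M[C]_(n, p)) r c :
  nth_mx (A *m B) r c = \sum_(t < n) nth_mx A r t * nth_mx B t c.
Proof.
case: (boolP ((r < m) && (c < p))%N) => [/andP[hr hc]|h].
  by rewrite (nth_mxE _ hr hc) mxE; apply: eq_bigr => t _; rewrite -!nth_mx_ord.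
rewrite nth_mx_out // big1 // => t _; case/nandP: h => h.
  by rewrite (nth_mx_out A) ?mul0r // (negbTE h).
by rewrite (nth_mx_out B) ?mulr0 // (negbTE h) andbF.
Qed.

Lemma nth_mx_sub m n (A B : 'M[C]_(m, n)) r c :
  nth_mx (A - B) r c = nth_mx A r c - nth_mx B r c.
Proof.
case: (boolP ((r < m) && (c < n))%N) => [/andP[hr hc]|h].
  by rewrite !(nth_mxE _ hr hc) !mxE.
by rewrite !nth_mx_out // subr0.
Qed.

Lemma nth_mx_ctmx m n (A : 'M[C]_(m, n)) r c : nth_mx (ctmx A) r c = (nth_mx A c r)^*.
Proof.
case: (boolP ((r < n) && (c < m))%N) => [/andP[hr hc]|h].
  by rewrite (nth_mxE _ hr hc) (nth_mxE _ hc hr) !mxE.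
by rewrite !nth_mx_out ?conjC0 // andbC.
Qed.

Lemma nth_mx1 n r c : nth_mx (1%:M : 'M[C]_n) r c = ((r == c) && (r < n)%N)%:R.
Proof.
case: (boolP ((r < n) && (c < n))%N) => [/andP[hr hc]|h].
  by rewrite (nth_mxE _ hr hc) mxE hr andbT.
rewrite nth_mx_out //; case: eqP h => // ->; by rewrite andbb => /negbTE ->.
Qed.

Lemma nth_mx_lead m n p q (M : 'M[C]_(m, n)) r c :
  nth_mx (lead_mx p q M) r c = if ((r < p) && (c < q))%N then nth_mx M r c else 0.
Proof.
case: (boolP ((r < _) && (c < _))%N) => [/andP[hr hc]|h]; last by rewrite nth_mx_out.
by rewrite (nth_mxE _ hr hc) mxE.
Qed.

Lemma nth_mx_lead_row m n p (M : 'M[C]_(m, n)) r c : (r < p)%N ->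
  nth_mx (lead_mx p n M) r c = nth_mx M r c.
Proof.
move=> hr; rewrite nth_mx_lead hr /=; case: ifP => // hc.
by rewrite nth_mx_out // hc andbF.
Qed.

Lemma nth_mx_Emx L m r c :
  nth_mx (Emx C L m) r c = if ((r < m * L) && (c < L))%N then (r == c)%:R else 0.
Proof.
case: (boolP ((r < _) && (c < _))%N) => [/andP[hr hc]|h]; last by rewrite nth_mx_out.
by rewrite (nth_mxE _ hr hc) mxE.
Qed.

Lemma nth_mx_dlsub L (O : 'M[C]_(L + L)) u a : (u < L)%N -> (a < L)%N ->
  nth_mx (dlsubmx O) u a = nth_mx O (L + u) a.
Proof.
move=> hu ha; have hLu : (L + u < L + L)%N by rewrite ltn_add2l.
have haL : (a < L + L)%N by apply: leq_trans ha (leq_addr _ _).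
rewrite (nth_mxE _ hu ha) (nth_mxE _ hLu haL) !mxE.
by congr (O _ _); apply: val_inj.
Qed.

Lemma sum_ord_pick q r (F : nat -> C) :
  \sum_(t < q) (((t : nat) == r)%:R * F t) = if (r < q)%N then F r else 0.
Proof.
case: ltnP => h.
  rewrite (bigD1 (Ordinal h)) //= eqxx mul1r big1 ?addr0 // => t ht.
  suff /negbTE -> : (t : nat) != r by rewrite mul0r.
  by apply: contra ht => /eqP e; apply/eqP/val_inj.
rewrite big1 // => t _.
have /negbTE -> : (t : nat) != r by rewrite neq_ltn (leq_trans (ltn_ord t) h).
by rewrite mul0r.
Qed.

Lemma sum_ord_window o p q (F : nat -> C) : (o + p <= q)%N ->
  \sum_(t < q) (if (o <= t < o + p)%N then F t else 0) = \sum_(u < p) F (o + u)%N.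
Proof.
move=> h; rewrite -(big_mkord xpredT (fun t => if (o <= t < o + p)%N then F t else 0)).
rewrite (@big_cat_nat _ _ _ o 0 q) //=; last by lia.
rewrite (@big_cat_nat _ _ _ (o + p) o q) ?leq_addr //=.
have -> : \sum_(0 <= i < o) (if (o <= i < o + p)%N then F i else 0) = 0.
  by rewrite big_nat_cond big1 // => t /andP[/andP[_ ht] _]; rewrite leqNgt ht.
have -> : \sum_(o + p <= i < q) (if (o <= i < o + p)%N then F i else 0) = 0.
  by rewrite big_nat_cond big1 // => t /andP[/andP[ht _] _]; rewrite ltnNge ht andbF.
rewrite add0r addr0 (eq_big_nat _ _ (F2 := F)); last by move=> t ->.
rewrite -{1}(add0n o) big_addn addKn big_mkord.
by apply: eq_bigr => t _; rewrite addnC.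
Qed.

Lemma sum_ord_trunc p q (F : nat -> C) : (p <= q)%N ->
  \sum_(t < q) (if (t < p)%N then F t else 0) = \sum_(u < p) F u.
Proof. by move=> h; rewrite -(@sum_ord_window 0 p q F). Qed.

End NatIndexedEntries.

Section ConjugateTranspose.
Variable C : numClosedFieldType.

Lemma ctmxM m n p (A : 'M[C]_(m, n)) (B : 'M[C]_(n, p)) :
  ctmx (A *m B) = ctmx B *m ctmx A.
Proof. by rewrite /ctmx map_mxM trmx_mul. Qed.

Lemma ctmxK m n (A : 'M[C]_(m, n)) : ctmx (ctmx A) = A.
Proof. by apply/matrixP => i k; rewrite !mxE conjCK. Qed.

Lemma ctmx1 n : ctmx (1%:M : 'M[C]_n) = 1%:M.
Proof. by apply/matrixP => i k; rewrite !mxE eq_sym rmorph_nat. Qed.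

Lemma orthonormal_colsM n (A B : 'M[C]_n) :
  orthonormal_cols A -> orthonormal_cols B -> orthonormal_cols (A *m B).
Proof.
by rewrite /orthonormal_cols => hA hB; rewrite ctmxM mulmxA -(mulmxA (ctmx B)) hA mulmx1.
Qed.

Lemma orthonormal_cols_mulK m n l (Q : 'M[C]_(m, n)) (X : 'M[C]_(n, l)) :
  orthonormal_cols Q -> ctmx Q *m (Q *m X) = X.
Proof. by move=> hQ; rewrite mulmxA hQ mul1mx. Qed.

End ConjugateTranspose.

Section Embedding.
Variable C : numClosedFieldType.

(* [embed_mx o q P] is diag(I_o, P, I) of size q; the rotations Q_i^(m) are of this
   form (Qm_embed). *)
Definition embed_mx o q p (P : 'M[C]_p) : 'M[C]_q :=
  \matrix_(r < q, c < q)
    if ((o <= r < o + p) && (o <= c < o + p))%N then nth_mx P (r - o) (c - o)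
    else ((r : nat) == c)%:R.

Lemma nth_embed_mx o q p (P : 'M[C]_p) r c : (r < q)%N -> (c < q)%N ->
  nth_mx (embed_mx o q P) r c =
  if ((o <= r < o + p) && (o <= c < o + p))%N then nth_mx P (r - o) (c - o)
  else (r == c)%:R.
Proof. by move=> hr hc; rewrite (nth_mxE _ hr hc) mxE. Qed.

Lemma nth_embed_mx_mul o q p l (P : 'M[C]_p) (X : 'M[C]_(q, l)) r c :
  (o + p <= q)%N -> (r < q)%N ->
  nth_mx (embed_mx o q P *m X) r c =
  if (o <= r < o + p)%N then \sum_(u < p) nth_mx P (r - o) u * nth_mx X (o + u) c
  else nth_mx X r c.
Proof.
move=> hq hr; rewrite nth_mx_mul.
under eq_bigr => t _ do rewrite nth_embed_mx // ?ltn_ord.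
case: ifP => hrw /=; last first.
  under eq_bigr => t _ do rewrite eq_sym.
  by rewrite (sum_ord_pick q r (fun t => nth_mx X t c)) hr.
transitivity (\sum_(t < q) (if (o <= t < o + p)%N then
                 nth_mx P (r - o) (t - o) * nth_mx X t c else 0)).
  apply: eq_bigr => t _; case: ifP => // htw.
  suff /negbTE -> : r != t by rewrite mul0r.
  by apply: contraFN htw => /eqP <-.
rewrite (sum_ord_window (fun t => nth_mx P (r - o) (t - o) * nth_mx X t c)) //.
by apply: eq_bigr => u _; rewrite addKn.
Qed.

Lemma embed_mxM o q p (P P' : 'M[C]_p) : (o + p <= q)%N ->
  embed_mx o q P *m embed_mx o q P' = embed_mx o q (P *m P').
Proof.
move=> hq; apply: nth_mx_ext => r c hr hc.
rewrite nth_embed_mx_mul // !nth_embed_mx //; case: ifP => hrw; last by rewrite hrw.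
have hu (u : 'I_p) : (o <= o + u < o + p)%N by have := ltn_ord u; lia.
have col (u : 'I_p) : nth_mx (embed_mx o q P') (o + u) c =
    if (o <= c < o + p)%N then nth_mx P' u (c - o) else (o + u == c)%:R.
  by rewrite nth_embed_mx ?hu ?addKn //; have := hu u; lia.
under eq_bigr => u _ do rewrite col.
case: (boolP (o <= c < o + p)%N) => hcw /=; first by rewrite nth_mx_mul.
have /negbTE -> : r != c by apply: contraNneq hcw => <-.
rewrite big1 // => u _; suff /negbTE -> : (o + u)%N != c by rewrite mulr0.
by apply: contraNneq hcw => <-; rewrite hu.
Qed.

Lemma ctmx_embed_mx o q p (P : 'M[C]_p) : ctmx (embed_mx o q P) = embed_mx o q (ctmx P).
Proof.
apply: nth_mx_ext => r c hr hc.
rewrite nth_mx_ctmx !nth_embed_mx // andbC nth_mx_ctmx; case: ifP => _ //.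
by rewrite eq_sym conjC_nat.
Qed.

Lemma embed_mx1 o q p : embed_mx o q (1%:M : 'M[C]_p) = 1%:M.
Proof.
apply: nth_mx_ext => r c hr hc; rewrite nth_embed_mx // !nth_mx1 hr andbT.
case: ifP => [/andP[/andP[h1 h2] /andP[h3 h4]]|//].
have -> : (r - o < p)%N by lia.
have -> : (r - o == c - o)%N = (r == c) by apply/idP/idP => /eqP h; apply/eqP; lia.
by rewrite andbT.
Qed.

Lemma orthonormal_embed_mx o q p (P : 'M[C]_p) : (o + p <= q)%N ->
  orthonormal_cols P -> orthonormal_cols (embed_mx o q P).
Proof. by move=> hq hP; rewrite /orthonormal_cols ctmx_embed_mx embed_mxM // hP embed_mx1. Qed.

Lemma embed_mx_nest o q1 q2 p (P : 'M[C]_p) : (o + p <= q1)%N -> (q1 <= q2)%N ->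
  embed_mx o q2 P = embed_mx 0 q2 (embed_mx o q1 P).
Proof.
move=> h1 h2; apply: nth_mx_ext => r c hr hc.
rewrite [LHS]nth_embed_mx // [RHS]nth_embed_mx // !subn0 add0n /=.
case: (boolP ((r < q1) && (c < q1))%N) => [/andP[hr1 hc1]|hout].
  by rewrite nth_embed_mx.
case: ifP => // /andP[/andP[_ ?] /andP[_ ?]].
by case/nandP: hout => /negP; lia.
Qed.

Lemma lead_embed0_mul p q l (P : 'M[C]_p) (X : 'M[C]_(q, l)) : (p <= q)%N ->
  lead_mx p l (embed_mx 0 q P *m X) = P *m lead_mx p l X.
Proof.
move=> hpq; apply: nth_mx_ext => r c hr hc.
rewrite nth_mx_lead_row // nth_embed_mx_mul ?add0n ?hr ?(leq_trans hr) // nth_mx_mul.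
by apply: eq_bigr => u _; rewrite subn0 add0n nth_mx_lead_row.
Qed.

Lemma embed0_mul_lead p q l (P : 'M[C]_p) (Y : 'M[C]_(p, l)) : (p <= q)%N ->
  embed_mx 0 q P *m lead_mx q l Y = lead_mx q l (P *m Y).
Proof.
move=> hpq; apply: nth_mx_ext => r c hr hc.
rewrite nth_mx_lead_row // nth_embed_mx_mul ?add0n // /=.
case: ltnP => hrp; last by rewrite nth_mx_lead_row // !nth_mx_out // ltnNge hrp.
rewrite nth_mx_mul subn0; apply: eq_bigr => u _.
by rewrite add0n nth_mx_lead_row // (leq_trans (ltn_ord u)).
Qed.

End Embedding.

Section LeadingSubmatrices.
Variable C : numClosedFieldType.

Lemma lead_mx_lead m n p q p' q' (M : 'M[C]_(m, n)) :
  (minn p m <= p')%N -> (minn q n <= q')%N ->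
  lead_mx p q (lead_mx p' q' M) = lead_mx p q M.
Proof.
move=> hp hq; apply: nth_mx_ext => r c hr hc.
rewrite !nth_mx_lead hr hc /=; case: ifP => // /nandP h.
by rewrite nth_mx_out //; apply/nandP; case: h => /negP h; [left | right]; apply/negP; lia.
Qed.

Lemma lead_mx_id m n (M : 'M[C]_(m, n)) : lead_mx m n M = M.
Proof. by apply: nth_mx_ext => r c hr hc; rewrite nth_mx_lead hr hc. Qed.

Lemma lead_mxB m n p q (A B : 'M[C]_(m, n)) :
  lead_mx p q (A - B) = lead_mx p q A - lead_mx p q B.
Proof.
apply: nth_mx_ext => r c hr hc.
by rewrite nth_mx_sub !nth_mx_lead hr hc nth_mx_sub.
Qed.

Lemma lead_mx_mull m n p l (A : 'M[C]_(m, n)) (Y : 'M[C]_(n, l)) :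
  lead_mx p l (A *m Y) = lead_mx p n A *m Y.
Proof.
apply: nth_mx_ext => r c hr hc; rewrite nth_mx_lead_row // !nth_mx_mul.
by apply: eq_bigr => t _; rewrite nth_mx_lead_row.
Qed.

Lemma mul_lead_mx a b p l (A : 'M[C]_(a, b)) (Y : 'M[C]_(p, l)) : (p <= b)%N ->
  A *m lead_mx b l Y = lead_mx a p A *m Y.
Proof.
move=> hpb; apply: nth_mx_ext => r c hr hc; rewrite !nth_mx_mul.
transitivity (\sum_(t < b) (if (t < p)%N then nth_mx A r t * nth_mx Y t c else 0)).
  apply: eq_bigr => t _; rewrite nth_mx_lead_row //; case: ifP => // ht.
  by rewrite (nth_mx_out Y) ?mulr0 // ht.
rewrite (sum_ord_trunc (fun t => nth_mx A r t * nth_mx Y t c)) //.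
by apply: eq_bigr => t _; rewrite nth_mx_lead hr ltn_ord.
Qed.

Lemma Emx_mul L m l (S : 'M[C]_(L, l)) : Emx C L m *m S = lead_mx (m * L) l S.
Proof.
apply: nth_mx_ext => r c hr hc; rewrite nth_mx_mul nth_mx_lead hr hc /=.
under eq_bigr => t _ do rewrite nth_mx_Emx hr ltn_ord /= eq_sym.
rewrite (sum_ord_pick L r (fun t => nth_mx S t c)).
by case: ifP => // h; rewrite nth_mx_out // h.
Qed.

End LeadingSubmatrices.

Section LeastSquares.
Variable C : numClosedFieldType.

Definition frob2 m n (X : 'M[C]_(m, n)) := \sum_(i < m) \sum_(k < n) `|X i k| ^+ 2.

Lemma frobE m n (X : 'M[C]_(m, n)) : frob X = sqrtC (frob2 X).
Proof. by []. Qed.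

Lemma frob2_ge0 m n (X : 'M[C]_(m, n)) : 0 <= frob2 X.
Proof. by apply: sumr_ge0 => i _; apply: sumr_ge0 => k _; apply: exprn_ge0. Qed.

Lemma frob2_tr m n (X : 'M[C]_(m, n)) : frob2 X = \tr (ctmx X *m X).
Proof.
rewrite /frob2 /mxtrace exchange_big; apply: eq_bigr => k _; rewrite mxE.
by apply: eq_bigr => i _; rewrite !mxE normCKC.
Qed.

Lemma frob2_orthonormal m n (Q : 'M[C]_m) (X : 'M[C]_(m, n)) :
  orthonormal_cols Q -> frob2 (Q *m X) = frob2 X.
Proof. by move=> hQ; rewrite !frob2_tr ctmxM mulmxA -(mulmxA (ctmx X)) hQ mulmx1. Qed.

(* X = [R; 0], the shape the block QR factorization gives to Qbar_k Hbar_k. *)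
Definition zero_padded p q l (X : 'M[C]_(p, l)) (R : 'M[C]_(q, l)) :=
  forall r c, nth_mx X r c = if (r < q)%N then nth_mx R r c else 0.

Lemma zero_padded_mulr p q n l (X : 'M[C]_(p, n)) (R : 'M[C]_(q, n)) (Y : 'M[C]_(n, l)) :
  zero_padded X R -> zero_padded (X *m Y) (R *m Y).
Proof.
move=> hXR r c; rewrite nth_mx_mul; under eq_bigr => t _ do rewrite hXR.
by case: ifP => _; [rewrite nth_mx_mul | apply: big1 => t _; rewrite mul0r].
Qed.

Lemma zero_paddedP p q n (X : 'M[C]_(p, n)) (R : 'M[C]_(q, n)) : (q <= p)%N ->
  (forall (r : 'I_p) (c : 'I_n), X r c = if (r < q)%N then nth_mx R r c else 0) ->
  zero_padded X R.
Proof.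
move=> hqp hXR r c.
case: (boolP ((r < p) && (c < n))%N) => [/andP[hr hc]|h].
  by rewrite (nth_mxE _ hr hc) hXR.
rewrite nth_mx_out //; case: ifP => // hr; rewrite nth_mx_out //.
by apply: contra h => /andP[? ?]; apply/andP; split => //; lia.
Qed.

Lemma frob2_QR p q l (Q : 'M[C]_p) (H : 'M[C]_(p, q)) (R : 'M[C]_q)
    (b : 'M[C]_(p, l)) (Y : 'M[C]_(q, l)) :
  orthonormal_cols Q -> zero_padded (Q *m H) R ->
  frob2 (H *m Y - b) = \sum_(i < p) \sum_(k < l)
    `|nth_mx (Q *m b) i k - if (i < q)%N then nth_mx (R *m Y) i k else 0| ^+ 2.
Proof.
move=> hQ hQH; rewrite -(frob2_orthonormal _ hQ) mulmxBr mulmxA.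
apply: eq_bigr => i _; apply: eq_bigr => k _.
by rewrite -nth_mx_ord nth_mx_sub (zero_padded_mulr _ hQH) distrC.
Qed.

(* After rotating by Q the residual splits into a top part R Y' - (Q b)_top, which
   Y' = R^-1 (Q b)_top annihilates, and a bottom part that does not depend on Y'. *)
Lemma lsq_QR_top p q l (Q : 'M[C]_p) (H : 'M[C]_(p, q)) (R : 'M[C]_q)
    (b : 'M[C]_(p, l)) (Y : 'M[C]_(q, l)) :
  (q <= p)%N -> orthonormal_cols Q -> zero_padded (Q *m H) R -> R \in unitmx ->
  (forall Y', frob (H *m Y - b) <= frob (H *m Y' - b)) ->
  forall r c, (r < q)%N -> nth_mx (R *m Y) r c = nth_mx (Q *m b) r c.
Proof.
move=> hqp hQ hQH hR hmin.
pose dev (Y' : 'M[C]_(q, l)) (i : 'I_p) (k : 'I_l) :=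
  `|nth_mx (Q *m b) i k - if (i < q)%N then nth_mx (R *m Y') i k else 0| ^+ 2.
pose Ys := invmx R *m lead_mx q l (Q *m b).
have devYs i k : dev Ys i k = if (i < q)%N then 0 else dev Y i k.
  rewrite /dev /Ys; case: ifP => hi //.
  by rewrite mulmxA mulmxV // mul1mx nth_mx_lead hi ltn_ord subrr normr0 expr0n.
have := hmin Ys; rewrite !frobE ler_sqrtC ?nnegrE ?frob2_ge0 // !(frob2_QR _ _ hQ hQH).
have -> : \sum_(i < p) \sum_(k < l) dev Ys i k =
          \sum_(i < p) \sum_(k < l) (if (i < q)%N then 0 else dev Y i k).
  by apply: eq_bigr => i _; apply: eq_bigr => k _; apply: devYs.
have -> : \sum_(i < p) \sum_(k < l) dev Y i k =
    \sum_(i < p) (\sum_(k < l) (if (i < q)%N then dev Y i k else 0) +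
                  \sum_(k < l) (if (i < q)%N then 0 else dev Y i k)).
  apply: eq_bigr => i _; rewrite -big_split.
  by apply: eq_bigr => k _; case: ifP => _ /=; rewrite ?addr0 ?add0r.
rewrite big_split /=; set top := \sum_(i < p) _; rewrite addrC gerDl => top_le0.
have dev_ge0 (i : 'I_p) (k : 'I_l) : 0 <= (if (i < q)%N then dev Y i k else 0).
  by case: ifP; rewrite ?exprn_ge0.
have top0 : top = 0.
  by apply/eqP; rewrite eq_le top_le0 sumr_ge0 // => i _; apply: sumr_ge0.
move=> r c hr; have hrp : (r < p)%N by lia.
case: (ltnP c l) => hc; last by rewrite !nth_mx_out // !negb_and -!leqNgt hc orbT.
have row0 := psumr_eq0P (fun i _ => sumr_ge0 _ (fun k _ => dev_ge0 i k)) top0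
  (i := Ordinal hrp) isT.
have := psumr_eq0P (fun k _ => dev_ge0 (Ordinal hrp) k) row0 (i := Ordinal hc) isT.
by rewrite /= hr /dev /= hr => /eqP; rewrite expf_eq0 normr_eq0 subr_eq0 => /eqP.
Qed.

(* The block column [0; ...; 0; I_L], so that [ctmx (lastblk L k) *m M] is the last
   block row of M. *)
Definition lastblk L k : 'M[C]_(k.+1 * L, L) :=
  \matrix_(r < k.+1 * L, c < L) ((r : nat) == k * L + c)%:R.

Lemma nth_lastblk_mul L k l (X : 'M[C]_(L, l)) r c :
  nth_mx (lastblk L k *m X) r c =
  if (k * L <= r < k.+1 * L)%N then nth_mx X (r - k * L) c else 0.
Proof.
rewrite nth_mx_mul; case: (ltnP r (k.+1 * L)) => hr; last first.
  by rewrite andbF big1 // => u _; rewrite nth_mx_out ?mul0r // ltnNge hr.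
rewrite andbT; under eq_bigr => u _ do rewrite (nth_mxE _ hr (ltn_ord u)) mxE /=.
case: (leqP (k * L) r) => hk /=; last first.
  rewrite big1 // => u _; have /negbTE -> : (r != k * L + u)%N by apply/eqP; lia.
  by rewrite mul0r.
have hu : (r - k * L < L)%N by move: hr; rewrite mulSn; lia.
transitivity (\sum_(u < L) (((u : nat) == (r - k * L)%N)%:R * nth_mx X u c)).
  apply: eq_bigr => u _.
  by have -> : (r == k * L + u)%N = ((u : nat) == r - k * L)%N by apply/eqP/eqP; lia.
by rewrite (sum_ord_pick L (r - k * L)%N (fun u => nth_mx X u c)) hu.
Qed.

Lemma ctmx_lastblk_mul L k l (M : 'M[C]_(k.+1 * L, l)) :
  ctmx (lastblk L k) *m M = \matrix_(a < L, b < l) nth_mx M (k * L + a) b.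
Proof.
apply/matrixP => a b; rewrite !mxE.
have ha : (k * L + a < k.+1 * L)%N by have := ltn_ord a; rewrite mulSn; lia.
transitivity (\sum_(t < k.+1 * L) (((t : nat) == k * L + a)%:R * nth_mx M t b)).
  by apply: eq_bigr => t _; rewrite !mxE conjC_nat nth_mx_ord.
by rewrite (sum_ord_pick _ _ (fun t => nth_mx M t b)) ha.
Qed.

Lemma lsq_QR_residual L k l (Q : 'M[C]_(k.+1 * L)) (H : 'M[C]_(k.+1 * L, k * L))
    (R : 'M[C]_(k * L)) (b : 'M[C]_(k.+1 * L, l)) (Y : 'M[C]_(k * L, l)) :
  orthonormal_cols Q -> zero_padded (Q *m H) R -> R \in unitmx ->
  (forall Y', frob (H *m Y - b) <= frob (H *m Y' - b)) ->
  Q *m (H *m Y) = Q *m b - lastblk L k *m (ctmx (lastblk L k) *m (Q *m b)).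
Proof.
move=> hQ hQH hR hmin; apply: nth_mx_ext => r c hr hc.
have hkL : (k * L <= k.+1 * L)%N by rewrite leq_mul2r leqnSn orbT.
rewrite mulmxA (zero_padded_mulr _ hQH) nth_mx_sub nth_lastblk_mul hr andbT.
case: ltnP => hrk /=; first by rewrite subr0 (lsq_QR_top hkL hQ hQH hR hmin).
have hrL : (r - k * L < L)%N by move: hr; rewrite mulSn; lia.
by rewrite ctmx_lastblk_mul (nth_mxE _ hrL hc) mxE /= subnKC // subrr.
Qed.

End LeastSquares.

Section RotationBlocks.
Variable C : numClosedFieldType.

Lemma lastblk_embed_mul_lead L k l (P : 'M[C]_(L + L)) (X : 'M[C]_(k.+1 * L, l)) :
  ctmx (lastblk C L k.+1) *m (embed_mx (k * L) (k.+2 * L) P *m lead_mx (k.+2 * L) l X) =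
  dlsubmx P *m (ctmx (lastblk C L k) *m X).
Proof.
have hk1 : (k.+1 * L = k * L + L)%N by rewrite mulSn addnC.
have hk2 : (k.+2 * L = k * L + L + L)%N by rewrite mulSn hk1 addnC.
apply/matrixP => a b; rewrite ctmx_lastblk_mul !mxE.
have ha : (k.+1 * L + a < k.+2 * L)%N by have := ltn_ord a; lia.
rewrite nth_embed_mx_mul ?ifT; [|lia..].
rewrite big_split_ord /= [X in _ + X]big1 ?addr0 => [|v _]; last first.
  rewrite nth_mx_lead_row; last by have := ltn_ord v; lia.
  by rewrite (nth_mx_out X) ?mulr0 //; have := ltn_ord v; lia.
apply: eq_bigr => v _; rewrite ctmx_lastblk_mul !mxE -[P _ _]nth_mx_ord /=.
have -> : (k.+1 * L + a - k * L = L + a)%N by lia.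
by rewrite nth_mx_lead_row //; have := ltn_ord v; lia.
Qed.

Lemma lead_ctmx_embed_mul_lastblk L k l (P : 'M[C]_(L + L)) (Z : 'M[C]_(L, l)) :
  lead_mx (k.+1 * L) l (ctmx (embed_mx (k * L) (k.+2 * L) P) *m (lastblk C L k.+1 *m Z)) =
  lastblk C L k *m (ctmx (dlsubmx P) *m Z).
Proof.
have hk1 : (k.+1 * L = k * L + L)%N by rewrite mulSn addnC.
have hk2 : (k.+2 * L = k * L + L + L)%N by rewrite mulSn hk1 addnC.
apply: nth_mx_ext => r c hr hc.
rewrite nth_mx_lead_row // ctmx_embed_mx nth_embed_mx_mul; [|lia..].
rewrite !nth_lastblk_mul hr andbT; case: (leqP (k * L) r) => hkr /=; last first.
  by rewrite ifF //; lia.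
rewrite ifT; last by lia.
rewrite big_split_ord /= big1 ?add0r => [|v _]; last first.
  by rewrite nth_lastblk_mul ifF ?mulr0 //; have := ltn_ord v; lia.
rewrite nth_mx_mul; apply: eq_bigr => v _.
rewrite nth_lastblk_mul ifT; last by have := ltn_ord v; lia.
have -> : (k * L + (L + v) - k.+1 * L = v)%N by lia.
by rewrite !nth_mx_ctmx nth_mx_dlsub //; lia.
Qed.

End RotationBlocks.

Section QR.
Variable C : numClosedFieldType.
Variables (L : nat) (Om : nat -> 'M[C]_(L + L)).

Lemma Qm_embed m i : (0 < i)%N -> Qm Om m i = embed_mx (i.-1 * L) (m * L) (Om i).
Proof.
case: i => // i _; apply/matrixP => r c; rewrite !mxE /=.
have -> : (i.+2 * L = i * L + (L + L))%N by rewrite !mulSn; lia.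
by rewrite !andbA.
Qed.

Lemma orthonormal_Qm m i : (0 < i < m)%N ->
  orthonormal_cols (Om i) -> orthonormal_cols (Qm Om m i).
Proof.
case: i => // i /= him hO; rewrite Qm_embed //; apply: orthonormal_embed_mx => //.
have : (i.+2 * L <= m * L)%N by rewrite leq_mul2r him orbT.
by rewrite !mulSn; lia.
Qed.

Lemma orthonormal_Qbar k :
  (forall i, (0 < i <= k)%N -> orthonormal_cols (Om i)) -> orthonormal_cols (Qbar Om k).
Proof.
move=> hO; rewrite /Qbar.
have : all (fun i => 0 < i <= k)%N (iota 1 k).
  by apply/allP => i; rewrite mem_iota; lia.
elim: (iota 1 k) => [|i s IH] /=; first by rewrite /orthonormal_cols ctmx1 mul1mx.
case/andP=> hi hs; apply: orthonormal_colsM; first exact: IH.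
by apply: orthonormal_Qm (hO i hi); lia.
Qed.

Lemma QbarS k : Qbar Om k.+1 = Qm Om k.+2 k.+1 *m embed_mx 0 (k.+2 * L) (Qbar Om k).
Proof.
have foldr_mul1 (M : nat -> 'M[C]_(k.+2 * L)) (Z : 'M[C]_(k.+2 * L)) s :
    foldr (fun i acc => acc *m M i) Z s = Z *m foldr (fun i acc => acc *m M i) 1%:M s.
  by elim: s => [|a s IH] /=; rewrite ?mulmx1 // IH mulmxA.
rewrite /Qbar.
have -> : iota 1 k.+1 = iota 1 k ++ [:: k.+1] by rewrite -[k.+1]addn1 iotaD addnC.
rewrite foldr_cat /= mul1mx foldr_mul1; congr (_ *m _).
have : all (fun i => 0 < i <= k)%N (iota 1 k).
  by apply/allP => i; rewrite mem_iota; lia.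
elim: (iota 1 k) => [|i s IH] /=; first by rewrite embed_mx1.
case/andP=> hi hs; rewrite IH // -embed_mxM; last by rewrite add0n leq_mul2r leqnSn orbT.
congr (_ *m _); case: i hi {hs} => // i /andP[_ hik].
rewrite !Qm_embed // (embed_mx_nest (q1 := k.+1 * L)); last by rewrite leq_mul2r leqnSn orbT.
  by [].
have : (i.+2 * L <= k.+1 * L)%N by rewrite leq_mul2r ltnS hik orbT.
by rewrite /= !mulSn; lia.
Qed.

End QR.

Section Arnoldi.
Variable C : numClosedFieldType.

Lemma hessenberg_lead L k (Hbar : 'M[C]_(k.+2 * L, k.+1 * L)) :
  (forall i k', (1 <= k')%N -> (k'.+1 < i)%N -> blk L Hbar i k' = 0) ->
  lead_mx (k.+2 * L) (k * L) Hbar =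
  lead_mx (k.+2 * L) (k * L) (lead_mx (k.+1 * L) (k * L) Hbar).
Proof.
move=> hHess; apply: nth_mx_ext => r c hr hc.
rewrite !nth_mx_lead hr hc /=; case: ltnP => hr1 //=.
have hL : (0 < L)%N by rewrite lt0n; apply: contraTneq hc => ->; rewrite muln0.
have ha : (r - k.+1 * L < L)%N by move: hr; rewrite mulSn; lia.
have hb : (c %% L < L)%N by rewrite ltn_pmod.
have hblk : ((c %/ L).+2 < k.+2)%N by rewrite !ltnS ltn_divLR.
have := congr1 (fun M : 'M[C]_L => M (Ordinal ha) (Ordinal hb))
  (hHess _ (c %/ L).+1 isT hblk).
by rewrite !mxE /= subnKC // -divn_eq.
Qed.

Lemma arnoldi_residual n L k (A : 'M[C]_n) (B X0 : 'M[C]_(n, L)) (W : 'M[C]_(n, k.+2 * L))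
    (S0 : 'M[C]_L) (Hbar : 'M[C]_(k.+2 * L, k.+1 * L)) (Y : 'M[C]_(k * L, L)) :
  B - A *m X0 = lead_mx n L W *m S0 ->
  A *m lead_mx n (k.+1 * L) W = W *m Hbar ->
  lead_mx (k.+2 * L) (k * L) Hbar =
    lead_mx (k.+2 * L) (k * L) (lead_mx (k.+1 * L) (k * L) Hbar) ->
  B - A *m (X0 + lead_mx n (k * L) W *m Y) =
  lead_mx n (k.+1 * L) W *m (Emx C L k.+1 *m S0 - lead_mx (k.+1 * L) (k * L) Hbar *m Y).
Proof.
move=> hB hArn hHess.
have hkk1 : (k * L <= k.+1 * L)%N by rewrite leq_mul2r leqnSn orbT.
have hk12 : (k.+1 * L <= k.+2 * L)%N by rewrite leq_mul2r leqnSn orbT.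
have hL1 : (L <= k.+1 * L)%N by rewrite leq_pmull.
have hWk : lead_mx n (k * L) W =
           lead_mx n (k.+1 * L) W *m lead_mx (k.+1 * L) (k * L) (1%:M : 'M[C]_(k * L)).
  rewrite mul_lead_mx // mulmx1 lead_mx_lead ?minnn //.
  exact: leq_trans (geq_minl _ _) hkk1.
have hAW : A *m lead_mx n (k * L) W =
           lead_mx n (k.+1 * L) W *m lead_mx (k.+1 * L) (k * L) Hbar.
  rewrite hWk mulmxA hArn -mulmxA mul_lead_mx // mulmx1.
  by rewrite hHess -mul_lead_mx // lead_mx_id.
rewrite [in LHS]mulmxDr opprD addrA hB mulmxA hAW -mulmxA mulmxBr Emx_mul.
rewrite mul_lead_mx // lead_mx_lead ?minnn //.
exact: leq_trans (geq_minl _ _) hL1.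
Qed.

Lemma unitmx_rank_mulmx m n (X : 'M[C]_(m, n)) (M : 'M[C]_n) :
  \rank (X *m M) = n -> M \in unitmx.
Proof.
move=> hrk; rewrite -row_free_unit /row_free eqn_leq rank_leq_row /=.
by rewrite -{1}hrk mxrankM_maxr.
Qed.

End Arnoldi.

Section CSDecomposition.
Variable C : numClosedFieldType.

Lemma ctmx_diag_nonneg L (c : 'rV[C]_L) : (forall i, 0 <= c 0 i) -> ctmx (diag_mx c) = diag_mx c.
Proof.
move=> hc; apply/matrixP => a b; rewrite !mxE eq_sym.
by case: eqP => [->|_]; rewrite ?mulr1n ?geC0_conj // !mulr0n conjC0.
Qed.

Lemma gram_svd L (U V : 'M[C]_L) (c : 'rV[C]_L) :
  orthonormal_cols U -> (forall i, 0 <= c 0 i) ->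
  ctmx (U *m diag_mx c *m ctmx V) *m (U *m diag_mx c *m ctmx V) =
  V *m (diag_mx c *m diag_mx c) *m ctmx V.
Proof.
move=> hU hc; rewrite !ctmxM ctmxK ctmx_diag_nonneg // !mulmxA.
by rewrite -(mulmxA _ (ctmx U)) hU mulmx1.
Qed.

Lemma diag_mx_cos_sin L (c s : 'rV[C]_L) : (forall i, c 0 i ^+ 2 + s 0 i ^+ 2 = 1) ->
  diag_mx c *m diag_mx c + diag_mx s *m diag_mx s = 1%:M.
Proof.
move=> hcs; rewrite !mul_diag_mx; apply/matrixP => a b; rewrite !mxE.
by case: eqP => _; rewrite ?mulr1n -?expr2 ?hcs // !mulr0n !mulr0 addr0.
Qed.

Lemma gram_ul_dl L (O : 'M[C]_(L + L)) : orthonormal_cols O ->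
  ctmx (ulsubmx O) *m ulsubmx O + ctmx (dlsubmx O) *m dlsubmx O = 1%:M.
Proof.
move=> hO; apply/matrixP => a b.
have := congr1 (fun M : 'M[C]_(L + L) => M (lshift L a) (lshift L b)) hO.
rewrite !mxE big_split_ord /= => <-.
by congr (_ + _); apply: eq_bigr => i _; rewrite !mxE.
Qed.

Lemma cs_weights L (Ct U1 V : 'M[C]_L) (O : 'M[C]_(L + L)) (c s : 'rV[C]_L) :
  orthonormal_cols O -> Ct \in unitmx -> orthonormal_cols U1 -> orthonormal_cols V ->
  (forall i, 0 <= c 0 i) -> (forall i, c 0 i ^+ 2 + s 0 i ^+ 2 = 1) ->
  ulsubmx O = U1 *m diag_mx c *m ctmx V ->
  let M1 := invmx Ct *m V *m (diag_mx c *m diag_mx c) *m ctmx V *m Ct in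
  let M2 := invmx Ct *m V *m (diag_mx s *m diag_mx s) *m ctmx V *m Ct in
  [/\ M1 + M2 = 1%:M, M1 = invmx Ct *m ctmx (ulsubmx O) *m ulsubmx O *m Ct &
      ctmx (dlsubmx O) *m (dlsubmx O *m Ct) = Ct - Ct *m M1].
Proof.
move=> hO hCt hU1 hV hc hcs hQ11 M1 M2.
have hM1 : M1 = invmx Ct *m ctmx (ulsubmx O) *m ulsubmx O *m Ct.
  by rewrite -(mulmxA (invmx Ct)) hQ11 gram_svd // /M1 !mulmxA.
split=> //.
  rewrite /M1 /M2 -mulmxDl -mulmxDl -mulmxDr diag_mx_cos_sin // mulmx1.
  by rewrite -(mulmxA (invmx Ct)) (mulmx1C hV) mulmx1 mulVmx.
rewrite hM1 !mulmxA mulmxV // mul1mx -[X in X - _](mul1mx Ct) -(gram_ul_dl hO) mulmxDl.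
by rewrite addrAC subrr add0r.
Qed.

Lemma mulmx_interpolate m l (K : 'M[C]_m) (P g Yf Yp Yj : 'M[C]_(m, l)) (Ct M1 M2 : 'M[C]_l) :
  K \in unitmx -> M1 + M2 = 1%:M ->
  K *m Yf = g -> K *m Yp = g - P *m Ct -> K *m Yj = g - P *m (Ct - Ct *m M1) ->
  Yj = Yf *m M1 + Yp *m M2.
Proof.
move=> hK hM hf hp hj; apply: (can_inj (mulKmx hK)).
have -> : M2 = 1%:M - M1 by rewrite -hM addrC addKr.
rewrite hj [RHS]mulmxDr !mulmxA hf hp !mulmxBr mulmx1 mulmxBl mulmxA.
by rewrite !opprB addrCA [RHS]addrC -[RHS]addrA subrK addrC.
Qed.

End CSDecomposition.

Section GMRESSteps.
Variable C : numClosedFieldType.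
Variables (L k : nat) (Om : nat -> 'M[C]_(L + L)) (Hbar : 'M[C]_(k.+2 * L, k.+1 * L)).
Variable S0 : 'M[C]_L.
Hypothesis hOm : forall i, (0 < i <= k.+1)%N -> orthonormal_cols (Om i).

(* Here j = k + 1, and Ct is the C~_j of the statement. *)
Let g := Qbar Om k *m Emx C L k.+1 *m S0.
Let Ct : 'M[C]_L := \matrix_(a < L, b < L) nth_mx g (k * L + a) b.
Let Hk := lead_mx (k.+1 * L) (k * L) Hbar.
Let Hj := lead_mx (k.+1 * L) (k.+1 * L) Hbar.

Let Ct_lastblk : Ct = ctmx (lastblk C L k) *m g.
Proof. by rewrite ctmx_lastblk_mul. Qed.

Let orthonormal_Qbar_k : orthonormal_cols (Qbar Om k).
Proof. by apply: orthonormal_Qbar => i /andP[i_gt0 i_le]; apply: hOm; rewrite i_gt0 ltnW. Qed.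

Lemma gmres_prev_residual (R : 'M[C]_(k * L)) (Y : 'M[C]_(k * L, L)) :
  zero_padded (Qbar Om k *m Hk) R -> R \in unitmx ->
  (forall Y', frob (Hk *m Y - Emx C L k.+1 *m S0) <= frob (Hk *m Y' - Emx C L k.+1 *m S0)) ->
  Qbar Om k *m (Hk *m Y) = g - lastblk C L k *m Ct.
Proof.
move=> hQR hR hmin; rewrite (lsq_QR_residual orthonormal_Qbar_k hQR hR hmin).
by rewrite mulmxA -/g -Ct_lastblk.
Qed.

Lemma gmres_prev_residual_coeffs (R : 'M[C]_(k * L)) (Y : 'M[C]_(k * L, L)) :
  zero_padded (Qbar Om k *m Hk) R -> R \in unitmx ->
  (forall Y', frob (Hk *m Y - Emx C L k.+1 *m S0) <= frob (Hk *m Y' - Emx C L k.+1 *m S0)) ->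
  Emx C L k.+1 *m S0 - Hk *m Y = ctmx (Qbar Om k) *m (lastblk C L k *m Ct).
Proof.
move=> hQR hR hmin; rewrite -[LHS](orthonormal_cols_mulK _ orthonormal_Qbar_k) mulmxBr.
by rewrite (gmres_prev_residual hQR hR hmin) (mulmxA (Qbar Om k)) -/g opprB addrC subrK.
Qed.

(* Qbar_(k+1) = Q_(k+1) diag(Qbar_k, I_L): undoing Q_(k+1) moves the new last block
   Q21 Ct of the rotated right-hand side back into block row k through Q21^*. *)
Lemma gmres_last_residual (R : 'M[C]_(k.+1 * L)) (Y : 'M[C]_(k.+1 * L, L)) :
  zero_padded (Qbar Om k.+1 *m lead_mx (k.+2 * L) (k.+1 * L) Hbar) R -> R \in unitmx ->
  (forall Y', frob (lead_mx (k.+2 * L) (k.+1 * L) Hbar *m Y - Emx C L k.+2 *m S0)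
           <= frob (lead_mx (k.+2 * L) (k.+1 * L) Hbar *m Y' - Emx C L k.+2 *m S0)) ->
  Qbar Om k *m (Hj *m Y) =
  g - lastblk C L k *m (ctmx (dlsubmx (Om k.+1)) *m (dlsubmx (Om k.+1) *m Ct)).
Proof.
move=> hQR hR hmin.
have hk12 : (k.+1 * L <= k.+2 * L)%N by rewrite leq_mul2r leqnSn orbT.
have eQm : Qm Om k.+2 k.+1 = embed_mx (k * L) (k.+2 * L) (Om k.+1) by rewrite Qm_embed.
have hQm : orthonormal_cols (Qm Om k.+2 k.+1) :=
  orthonormal_Qm (m := k.+2) (i := k.+1) (ltnSn k.+1) (hOm (i := k.+1) (leqnn _)).
have hEb : embed_mx 0 (k.+2 * L) (Qbar Om k) *m (Emx C L k.+2 *m S0) =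
           lead_mx (k.+2 * L) L g.
  rewrite /g -mulmxA -embed0_mul_lead // !Emx_mul lead_mx_lead ?minnn //.
  by rewrite (leq_trans (geq_minr _ _)) // leq_pmull.
have := lsq_QR_residual (orthonormal_Qbar hOm) hQR hR hmin.
rewrite QbarS -!mulmxA hEb eQm lastblk_embed_mul_lead -eQm -Ct_lastblk.
move=> /(congr1 (mulmx (ctmx (Qm Om k.+2 k.+1)))).
rewrite mulmxBr !(orthonormal_cols_mulK _ hQm) => /(congr1 (lead_mx (k.+1 * L) L)).
rewrite lead_mxB eQm lead_ctmx_embed_mul_lastblk lead_embed0_mul // lead_mx_mull.
by rewrite !lead_mx_lead ?lead_mx_id ?geq_minr ?minnn.
Qed.

Lemma gmres_coeff_interpolation (Rk : 'M[C]_(k * L)) (Rj : 'M[C]_(k.+1 * L))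
    (Yp : 'M[C]_(k * L, L)) (Yj : 'M[C]_(k.+1 * L, L)) (M1 M2 : 'M[C]_L) :
  zero_padded (Qbar Om k *m Hk) Rk -> Rk \in unitmx ->
  (forall Y', frob (Hk *m Yp - Emx C L k.+1 *m S0) <= frob (Hk *m Y' - Emx C L k.+1 *m S0)) ->
  zero_padded (Qbar Om k.+1 *m lead_mx (k.+2 * L) (k.+1 * L) Hbar) Rj -> Rj \in unitmx ->
  (forall Y', frob (lead_mx (k.+2 * L) (k.+1 * L) Hbar *m Yj - Emx C L k.+2 *m S0)
           <= frob (lead_mx (k.+2 * L) (k.+1 * L) Hbar *m Y' - Emx C L k.+2 *m S0)) ->
  Hj \in unitmx -> M1 + M2 = 1%:M ->
  ctmx (dlsubmx (Om k.+1)) *m (dlsubmx (Om k.+1) *m Ct) = Ct - Ct *m M1 ->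
  Yj = invmx Hj *m Emx C L k.+1 *m S0 *m M1 + lead_mx (k.+1 * L) L Yp *m M2.
Proof.
move=> hQRk hRk hYp hQRj hRj hYj hHj hM12 hQ21.
have hK : Qbar Om k *m Hj \in unitmx.
  by rewrite unitmx_mul hHj (mulmx1_unit orthonormal_Qbar_k).2.
apply: (mulmx_interpolate hK hM12 (P := lastblk C L k) (g := g) (Ct := Ct)).
- by rewrite -!mulmxA mulKVmx // !mulmxA.
- rewrite -mulmxA mul_lead_mx; last by rewrite leq_mul2r leqnSn orbT.
  rewrite /Hj lead_mx_lead ?geq_minl ?geq_minr //.
  exact: gmres_prev_residual hQRk hRk hYp.
- by rewrite -mulmxA (gmres_last_residual hQRj hRj hYj) hQ21.
Qed.

End GMRESSteps.

Theorem mainTheorem8 (C : numClosedFieldType) (n L j : nat)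
  (A : 'M[C]_n) (B X0 : 'M[C]_(n, L))
  (W : 'M[C]_(n, j.+1 * L)) (S0 : 'M[C]_L)
  (Hbar : 'M[C]_(j.+1 * L, j * L))
  (Omega : nat -> 'M[C]_(L + L))
  (U1 U2 V : 'M[C]_L) (c s : 'rV[C]_L)
  (Yj : 'M[C]_(j * L, L)) (Yjm1 : 'M[C]_(j.-1 * L, L)) :
  (1 <= n)%N -> (1 <= L)%N -> (2 <= j)%N ->
  (* Arnoldi basis: W = [V_1, ..., V_{j+1}] with orthonormal columns, F0 = V1 S0 *)
  orthonormal_cols W ->
  B - A *m X0 = lead_mx n L W *m S0 ->
  upper_tri S0 ->
  (* block Arnoldi relation A W_j = W_{j+1} Hbar_j *)
  A *m lead_mx n (j * L) W = W *m Hbar ->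
  (* Hbar_j block upper Hessenberg with upper triangular subdiagonal blocks *)
  (forall i k, (1 <= k)%N -> (k.+1 < i)%N -> blk L Hbar i k = 0) ->
  (forall k, (1 <= k <= j)%N -> upper_tri (blk L Hbar k.+1 k)) ->
  (* Hbar_j has full column rank *)
  \rank Hbar = (j * L)%N ->
  (* block QR factorization *)
  (forall i, (1 <= i <= j)%N -> orthonormal_cols (Omega i)) ->
  (forall k, (1 <= k <= j)%N ->
     exists R : 'M[C]_(k * L),
       [/\ upper_tri R, R \in unitmx &
        forall (r : 'I_(k.+1 * L)) (q : 'I_(k * L)),
          (Qbar Omega k *m lead_mx (k.+1 * L) (k * L) Hbar) r q =
          if (r < k * L)%N then nth_mx R r q else 0]) ->
  (* H_j nonsingular *)
  lead_mx (j * L) (j * L) Hbar \in unitmx ->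
  (* Yj, Yjm1 : the block GMRES least-squares minimizers at steps j and j-1 *)
  (forall Y : 'M[C]_(j * L, L),
     frob (lead_mx (j.+1 * L) (j * L) Hbar *m Yj - Emx C L j.+1 *m S0)
     <= frob (lead_mx (j.+1 * L) (j * L) Hbar *m Y - Emx C L j.+1 *m S0)) ->
  (forall Y : 'M[C]_(j.-1 * L, L),
     frob (lead_mx (j.-1.+1 * L) (j.-1 * L) Hbar *m Yjm1 - Emx C L j.-1.+1 *m S0)
     <= frob (lead_mx (j.-1.+1 * L) (j.-1 * L) Hbar *m Y - Emx C L j.-1.+1 *m S0)) ->
  (* F_{j-1}^{(G)} has rank L *)
  \rank (B - A *m (X0 + lead_mx n (j.-1 * L) W *m Yjm1)) = L ->
  (* CS decomposition of the first block column of Omega_j *)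
  orthonormal_cols U1 -> orthonormal_cols U2 -> orthonormal_cols V ->
  (forall i, 0 <= c 0 i) -> (forall i, 0 <= s 0 i) ->
  (forall i, c 0 i ^+ 2 + s 0 i ^+ 2 = 1) ->
  ulsubmx (Omega j) = U1 *m diag_mx c *m ctmx V ->
  dlsubmx (Omega j) = U2 *m diag_mx s *m ctmx V ->
  let Ct : 'M[C]_L :=
    \matrix_(a < L, b < L)
      nth_mx (Qbar Omega j.-1 *m Emx C L j.-1.+1 *m S0) (j.-1 * L + a) b in
  let XG_j := X0 + lead_mx n (j * L) W *m Yj in
  let XG_jm1 := X0 + lead_mx n (j.-1 * L) W *m Yjm1 in
  let XF_j := X0 + lead_mx n (j * L) W *m
                   (invmx (lead_mx (j * L) (j * L) Hbar) *m Emx C L j *m S0) in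
  let M1 := invmx Ct *m V *m (diag_mx c *m diag_mx c) *m ctmx V *m Ct in
  let M2 := invmx Ct *m V *m (diag_mx s *m diag_mx s) *m ctmx V *m Ct in
  [/\ XG_j = XF_j *m M1 + XG_jm1 *m M2,
      M1 + M2 = 1%:M &
      M1 = invmx Ct *m ctmx (ulsubmx (Omega j)) *m ulsubmx (Omega j) *m Ct].
Proof.
move: W Hbar Yj Yjm1; case: j => [|k] // W Hbar Yj Yjm1 _ _ hk.
move=> _ hB _ hArn hHess _ _ hOm hQR hHj hYj hYjm1 hrankF hU1 _ hV hc _ hcs hQ11 _.
move=> Ct XG_j XG_jm1 XF_j M1 M2 /=.
have hkk1 : (k * L <= k.+1 * L)%N by rewrite leq_mul2r leqnSn orbT.
have hk12 : (k.+1 * L <= k.+2 * L)%N by rewrite leq_mul2r leqnSn orbT.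
have hk1 : (0 < k <= k.+1)%N by rewrite -ltnS hk leqnSn.
have [Rk [_ hRk /(zero_paddedP hkk1) hQRk]] := hQR k hk1.
have [Rj [_ hRj /(zero_paddedP hk12) hQRj]] := hQR k.+1 (leqnn _).
have hCt : Ct \in unitmx.
  move: hrankF; rewrite (arnoldi_residual _ hB hArn (hessenberg_lead hHess)).
  by rewrite (gmres_prev_residual_coeffs hOm hQRk hRk hYjm1) !mulmxA => /unitmx_rank_mulmx.
have [hM12 hM1 hQ21] := cs_weights (hOm k.+1 (leqnn _)) hCt hU1 hV hc hcs hQ11.
have hY := gmres_coeff_interpolation hOm hQRk hRk hYjm1 hQRj hRj hYj hHj hM12 hQ21.
have hWY : lead_mx n (k * L) W *m Yjm1 = lead_mx n (k.+1 * L) W *m lead_mx (k.+1 * L) L Yjm1.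
  by rewrite mul_lead_mx // lead_mx_lead ?minnn // (leq_trans (geq_minl _ _) hkk1).
split=> //; rewrite /XG_j /XF_j /XG_jm1 /= hY hWY -[X0 in LHS]mulmx1 -hM12.
by rewrite !mulmxDr !mulmxDl !mulmxA addrACA.
Qed.
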